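(* Let $\sigma:[0,\infty)\to[0,\infty)$ be nondecreasing with $\lim_{t\to\infty}\sigma(t)=\infty$. Then $\alpha(\sigma)=\frac{1}{\gamma(\sigma)}$, where, since $\gamma(\sigma),\alpha(\sigma)\in[0,\infty]$, for the extreme values this means that $\gamma(\sigma)=\infty$ if and only if $\alpha(\sigma)=0$, and $\gamma(\sigma)=0$ if and only if $\alpha(\sigma)=\infty$.
   Context: For a measurable positive function $f$ on some $[A,\infty)$, its upper Matuszewska index is $\alpha(f):=\inf\{\alpha\in\mathbb{R}:\exists C_\alpha>0\ \forall\Lambda>1,\ \limsup_{x\to\infty}\sup_{\lambda\in[1,\Lambda]}\frac{f(\lambda x)}{\lambda^{\alpha}f(x)}\le C_\alpha\}$ (with $\inf\emptyset=\infty$); for $\sigma$ as in the claim, $\alpha(\sigma)$ means the index of the restriction of $\sigma$ to any $[A,\infty)$ with $A>0$ on which $\sigma>0$ (independent of $A$). For $\gamma>0$, say $(P_{\sigma,\gamma})$ holds if there is $K>1$ with $\limsup_{t\to\infty}\sigma(K^{\gamma}t)/\sigma(t)<K$; $\gamma(\sigma):=\sup\{\gamma>0:(P_{\sigma,\gamma})\text{ holds}\}$, and $\gamma(\sigma):=0$ if no $(P_{\sigma,\gamma})$ holds. *)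

From HB Require Import structures.
From mathcomp Require Import all_boot all_order all_algebra.
From mathcomp Require Import all_classical all_reals all_analysis.
Set Implicit Arguments. Unset Strict Implicit. Unset Printing Implicit Defensive.
Import Order.TTheory GRing.Theory Num.Theory.
Import numFieldNormedType.Exports.
Local Open Scope classical_set_scope.
Local Open Scope ring_scope.

Section Defs.
Variable R : realType.
Local Open Scope ereal_scope.

Definition mat_sup (f : R -> R) (a L x : R) : \bar R :=
  ereal_sup [set ((f (l * x)) / (l `^ a * f x))%:E | l in `[1%R, L]].

(* The limsup is x -> +oo (limf_esup along pinfty_nbhs), so only the values of f
   on [A, +oo) for any A matter: it is the index of any restriction of f to
   some [A, +oo). *)
Definition upper_matuszewska (f : R -> R) : \bar R :=
  ereal_inf [set a%:E | a in [set a : R | exists2 C : R, (0 < C)%R &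
     forall L : R, (1 < L)%R ->
       limf_esup (mat_sup f a L) (pinfty_nbhs R) <= C%:E]].

Definition P_prop (sigma : R -> R) (g : R) : Prop :=
  exists2 K : R, (1 < K)%R &
    limf_esup (fun t => (sigma (K `^ g * t) / sigma t)%:E) (pinfty_nbhs R) < K%:E.

Definition gamma_index (sigma : R -> R) : \bar R :=
  if `[< exists g : R, (0 < g)%R /\ P_prop sigma g >]
  then ereal_sup [set g%:E | g in [set g : R | (0 < g)%R /\ P_prop sigma g]]
  else 0.

Definition einv (x : \bar R) : \bar R :=
  match x with
  | EFin r => if r == 0%R then +oo else (r^-1)%:E
  | +oo => 0
  | -oo => 0
  end.
End Defs.

From HB Require Import structures.
From mathcomp Require Import all_boot all_order all_algebra.
From mathcomp Require Import all_classical all_reals all_analysis.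
From mathcomp Require Import lra ring.
Import Order.TTheory GRing.Theory Num.Theory.
Import numFieldNormedType.Exports.
Local Open Scope classical_set_scope.
Local Open Scope ring_scope.

(* Both (P_{sigma,g}) and the Matuszewska bound
   sigma(l x) <= C l^a sigma(x) (1 <= l, x large) control the polynomial
   growth of sigma.  If a is admissible and g a < 1, the bound with
   l = K^g gives sigma(K^g t) / sigma(t) <= C K^(g a) < K for K large.
   Conversely, if sigma(N t) <= q sigma(t) eventually, with N = K^g and
   q < K, iterating it gives the bound for every l >= 1 with exponent
   a = ln q / ln N < 1/g.  So for g > 0, (P_{sigma,g}) holds iff
   alpha(sigma) < 1/g: the g's form the interval (0, 1/alpha(sigma)),
   whose supremum is 1/alpha(sigma).  Monotonicity and sigma -> +oo make
   every admissible exponent nonnegative. *)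

Section limf_esup_near.
Context {U : choiceType} {T : filteredType U} {R : realType}.
Context {F : set_system T} {FF : Filter F}.
Implicit Types (u : T -> \bar R) (c : \bar R).
Local Open Scope ereal_scope.

Lemma limf_esup_lt u c : limf_esup u F < c -> \forall x \near F, u x < c.
Proof.
rewrite limf_esupE => /ereal_inf_lt[_ [V FV <-] Vc].
apply: filterS FV => x Vx; apply: le_lt_trans Vc.
by apply: ereal_sup_ubound; exists x.
Qed.

Lemma ge_limf_esup u c : (\forall x \near F, u x <= c) -> limf_esup u F <= c.
Proof.
move=> Fuc; rewrite limf_esupE; apply: ge_ereal_inf.
exists (ereal_sup (u @` [set x | u x <= c])).
  by exists [set x | u x <= c].
by apply/ereal_supP => _ [x + <-].
Qed.

End limf_esup_near.

Section real_powers.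
Context {R : realType}.

Lemma powR_gt1 (x r : R) : 1 < x -> 0 < r -> 1 < x `^ r.
Proof.
move=> x1 r0; have := gt0_ltr_powR r0 _ _ x1; rewrite powR1; apply.
  by rewrite nnegrE ler01.
by rewrite nnegrE ltW // (lt_trans ltr01).
Qed.

Lemma exists_exprn_ge (N l : R) : 1 < N -> 0 < l -> exists n : nat, l <= N ^+ n.
Proof.
move=> N1 l0; have lnN0 : 0 < ln N by rewrite ln_gt0.
have N0 : 0 < N by rewrite (lt_trans ltr01).
exists (Num.truncn (ln l / ln N)).+1.
rewrite -ler_ln ?posrE ?exprn_gt0 // lnXn // -mulr_natr mulrC -ler_pdivrMr //.
by rewrite ltW // truncnS_gt.
Qed.

End real_powers.

Definition admissible_exponent {R : realType} (f : R -> R) (a : R) : Prop :=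
  exists2 C : R, 0 < C & forall L : R, 1 < L ->
    (limf_esup (mat_sup f a L) (pinfty_nbhs R) <= C%:E)%E.

Lemma mat_sup_ge {R : realType} (f : R -> R) (a L x : R) {l : R} :
  1 <= l <= L -> ((f (l * x) / (l `^ a * f x))%:E <= mat_sup f a L x)%E.
Proof. by move=> lL; apply: ereal_sup_ubound; exists l; rewrite ?in_itv. Qed.

Section matuszewska_growth.
Context {R : realType} {f : R -> R}.
Hypothesis f_nd : forall s t : R, 0 <= s -> s <= t -> f s <= f t.
Hypothesis f_gt0 : \forall x \near +oo, 0 < f x.

Lemma admissible_exponent_bound a : admissible_exponent f a ->
  exists2 C, 0 < C & forall L, 1 < L ->
    \forall x \near +oo, f (L * x) <= C * L `^ a * f x.
Proof.
case=> C C0 hC; exists (C + 1); first by rewrite addr_gt0.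
move=> L L1.
have /limf_esup_lt : (limf_esup (mat_sup f a L) (pinfty_nbhs R) < (C + 1)%:E)%E.
  by apply: le_lt_trans (hC L L1) _; rewrite lte_fin ltrDl.
have LL : 1 <= L <= L by rewrite lexx ltW.
have La0 : 0 < L `^ a by rewrite powR_gt0 // (lt_trans ltr01).
apply: filterS2 f_gt0 => x fx0 /(le_lt_trans (mat_sup_ge f a L x LL)).
by rewrite lte_fin ltr_pdivrMr ?mulr_gt0 // mulrA => /ltW.
Qed.

Lemma admissible_exponent_ge0 a : admissible_exponent f a -> 0 <= a.
Proof.
move=> /admissible_exponent_bound[C C0 hC]; rewrite leNgt; apply/negP => a0.
(* For a < 0, some L > 1 has C L^a < 1, against f x <= f (L x). *)
have C1 : 1 < C + 1 by lra.
have [L L1 La] : exists2 L, 1 < L & L `^ a = (C + 1)^-1.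
  exists (expR (ln (C + 1) / - a)).
    by rewrite expR_gt1 divr_gt0 ?oppr_gt0 // ln_gt0.
  rewrite -expRM.
  have -> : ln (C + 1) / - a * a = - ln (C + 1) by field; rewrite lt_eqF.
  by rewrite expRN lnK // posrE; lra.
near (pinfty_nbhs R) => x.
have x0 : 0 < x by near: x; apply: nbhs_pinfty_gt; rewrite num_real.
have fx0 : 0 < f x by near: x.
have : f x <= C * L `^ a * f x.
  apply: le_trans (_ : f (L * x) <= _); last by near: x; exact: hC.
  by apply: f_nd; rewrite ?ltW // ltr_pMl.
rewrite La -[X in X <= _]mul1r ler_pM2r // ler_pdivlMr ?mul1r; lra.
Unshelve. all: by end_near.
Qed.

Lemma P_prop_of_admissible a g :
  admissible_exponent f a -> 0 < g -> g * a < 1 -> P_prop f g.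
Proof.
move=> /admissible_exponent_bound[C C0 hC] g0 ga1.
have [K K1 KE] : exists2 K, 1 < K & K = (C + 1) * K `^ (g * a).
  have u0 : 0 < ln (C + 1) / (1 - g * a).
    by rewrite divr_gt0 ?subr_gt0 // ln_gt0 //; lra.
  exists (expR (ln (C + 1) / (1 - g * a))); first by rewrite expR_gt1.
  rewrite -expRM -{2}[C + 1]lnK ?posrE; last lra.
  by rewrite -expRD; congr expR; field; rewrite subr_eq0 eq_sym lt_eqF.
exists K => //.
have Kg1 : 1 < K `^ g by exact: powR_gt1.
apply: (@le_lt_trans _ _ (C * K `^ (g * a))%:E).
  apply: ge_limf_esup; apply: filterS2 f_gt0 (hC _ Kg1) => x fx0.
  by rewrite lee_fin ler_pdivrMr // powRrM.
rewrite lte_fin [X in _ < X]KE ltr_pM2r ?powR_gt0 ?(lt_trans ltr01) //; lra.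
Qed.

Lemma doubling_powR_bound (N a T : R) : 1 < N -> 0 <= a -> 0 <= T ->
  (forall x, T <= x -> 0 <= f x /\ f (N * x) <= N `^ a * f x) ->
  forall l x, 1 <= l -> T <= x -> f (l * x) <= N `^ a * l `^ a * f x.
Proof.
move=> N1 a0 T0 hT.
have N0 : 0 < N by rewrite (lt_trans ltr01).
have powR_ge1 l : 1 <= l -> 1 <= l `^ a.
  move=> l1; have := @ge0_ler_powR _ a a0 1 l; rewrite powR1.
  by apply; rewrite ?nnegrE ?ler01 ?(le_trans ler01).
have bound_le_N l x :
    1 <= l <= N -> T <= x -> f (l * x) <= N `^ a * l `^ a * f x.
  move=> /andP[l1 lN] xT; have [fx0 fNx] := hT x xT.
  have x0 : 0 <= x := le_trans T0 xT.
  apply: le_trans (_ : f (N * x) <= _).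
    by apply: f_nd; rewrite ?ler_wpM2r // mulr_ge0 // (le_trans ler01).
  by rewrite (le_trans fNx) // ler_wpM2r // ler_peMr ?powR_ge0 ?powR_ge1.
suff bound_le_pow : forall n l x, 1 <= l <= N ^+ n -> T <= x ->
    f (l * x) <= N `^ a * l `^ a * f x.
  move=> l x l1 xT.
  have [n lN] := exists_exprn_ge _ _ N1 (lt_le_trans ltr01 l1).
  by apply: (bound_le_pow n); rewrite ?l1.
elim=> [|n IHn] l x /andP[l1 lN] xT.
  by apply: bound_le_N; rewrite // l1 (le_trans lN) // expr0 ltW.
have [lN1|Nl] := leP l N; first by apply: bound_le_N; rewrite ?l1.
have x0 : 0 <= x := le_trans T0 xT.
have NxT : T <= N * x by apply: le_trans xT _; rewrite ler_peMl // ltW.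
have l'1 : 1 <= l / N by rewrite ler_pdivlMr // mul1r ltW.
have := IHn (l / N) (N * x).
rewrite l'1 ler_pdivrMr // -exprSr lN => /(_ isT NxT).
rewrite mulrA divfK ?gt_eqF // => /le_trans; apply.
have [fx0 fNx] := hT x xT.
have lE : l `^ a = (l / N) `^ a * N `^ a.
  by rewrite -powRM ?divfK ?lt0r_neq0 ?ltW // (lt_le_trans ltr01).
by rewrite lE !mulrA -[X in _ <= X]mulrA ler_wpM2l // mulr_ge0 ?powR_ge0.
Qed.

Lemma admissible_of_P_prop g : 0 < g -> P_prop f g ->
  exists2 a, admissible_exponent f a & a * g < 1.
Proof.
move=> g0 [K K1 hK].
have [q [q1 qK limq]] : exists q : R, [/\ 1 <= q, q < K &
    (limf_esup (fun t => (f (K `^ g * t) / f t)%:E) (pinfty_nbhs R) < q%:E)%E].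
  case: (limf_esup _ _) hK => [r| |] // hr; last by exists 1; rewrite ltNyr.
  rewrite lte_fin in hr; exists (Num.max 1 ((r + K) / 2)).
  rewrite le_max lexx gt_max K1 lte_fin lt_max.
  by split => //=; [lra | apply/orP; right; lra].
have N1 : 1 < K `^ g by exact: powR_gt1.
have lnK0 : 0 < ln K by rewrite ln_gt0.
have [a [a0 Na ag1]] : exists a, [/\ 0 <= a, (K `^ g) `^ a = q & a * g < 1].
  exists (ln q / (g * ln K)); split.
  - by rewrite divr_ge0 ?ln_ge0 // mulr_ge0 ?ltW.
  - rewrite -powRrM -{1}[K]lnK ?posrE ?(lt_trans ltr01) // -expRM.
    have -> : ln K * (g * (ln q / (g * ln K))) = ln q by field; rewrite !gt_eqF.
    by rewrite lnK // posrE (lt_le_trans ltr01).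
  - have -> : ln q / (g * ln K) * g = ln q / ln K by field; rewrite !gt_eqF.
    rewrite ltr_pdivrMr // mul1r.
    rewrite ltr_ln ?posrE //.
    - exact: lt_le_trans ltr01 q1.
    - exact: lt_trans ltr01 K1.
have [T T0 hT] : exists2 T, 0 <= T &
    forall x, T <= x -> 0 < f x /\ f (K `^ g * x) <= q * f x.
  have [M [_ hM]] : \forall x \near +oo, 0 < f x /\ f (K `^ g * x) <= q * f x.
    move: limq => /limf_esup_lt; apply: filterS2 f_gt0 => x fx0.
    by rewrite lte_fin ltr_pdivrMr // => /ltW.
  exists (Num.max 0 (M + 1)) => [|x]; first by rewrite le_max lexx.
  by rewrite ge_max => /andP[_ Mx]; apply: hM; lra.
have growth l x : 1 <= l -> T <= x -> f (l * x) <= q * l `^ a * f x.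
  rewrite -Na; apply: doubling_powR_bound => // z /hT[/ltW fz0 hz].
  by rewrite Na.
exists a => //; exists q => [|L L1]; first exact: lt_le_trans ltr01 q1.
apply: ge_limf_esup; exists T; split => [|x Tx]; first exact: num_real.
apply/ereal_supP => y [l /= + <-{y}]; rewrite in_itv /= => /andP[l1 _].
have [fx0 _] := hT x (ltW Tx).
have l0 : 0 < l := lt_le_trans ltr01 l1.
rewrite lee_fin ler_pdivrMr ?mulr_gt0 ?powR_gt0 //.
by rewrite mulrA; apply: growth => //; exact: ltW.
Qed.

Lemma upper_matuszewska_ge0 : (0 <= upper_matuszewska f)%E.
Proof.
by apply/ereal_infP => _ [a /admissible_exponent_ge0 a0 <-]; rewrite lee_fin.
Qed.

Lemma P_propP g : 0 < g -> P_prop f g <-> (upper_matuszewska f < (g^-1)%:E)%E.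
Proof.
move=> g0; split.
  move=> /(admissible_of_P_prop _ g0)[a fa ag1].
  apply: (@le_lt_trans _ _ a%:E); first by apply: ereal_inf_lbound; exists a.
  by rewrite lte_fin -div1r ltr_pdivlMr.
move=> /ereal_inf_lt[_ [a fa <-]]; rewrite lte_fin => ag.
by apply: (P_prop_of_admissible _ _ fa g0); rewrite mulrC -ltr_pdivlMr // div1r.
Qed.

End matuszewska_growth.

Section ereal_reciprocal.
Context {R : realType}.
Implicit Types x c z : \bar R.
Local Open Scope ereal_scope.

Lemma einv_ge0 x : 0 <= x -> 0 <= einv x.
Proof.
case: x => [r| |] //= r0; case: eqP => // _.
by rewrite lee_fin invr_ge0 -lee_fin.
Qed.

Lemma einvK x : 0 <= x -> einv (einv x) = x.
Proof.
case: x => [r| |] //= r0; last by rewrite eqxx.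
by case: eqVneq => [->|r_neq0] //=; rewrite invr_eq0 (negbTE r_neq0) invrK.
Qed.

Lemma einv_eqy x : einv x = +oo <-> x = 0.
Proof.
case: x => [r| |] //=; case: eqVneq => [->|r0] //.
by split => // -[/eqP]; rewrite (negbTE r0).
Qed.

Lemma einv_eq0 x : 0 <= x -> einv x = 0 <-> x = +oo.
Proof.
case: x => [r| |] //= r0; split => //; case: eqVneq => // r_neq0 [].
by move/eqP; rewrite invr_eq0 (negbTE r_neq0).
Qed.

Lemma lte_einv x (g : R) :
  0 <= x -> (0 < g)%R -> (x < (g^-1)%:E) = (g%:E < einv x).
Proof.
case: x => [r| |] //= x0 g0; last by rewrite ltNge leey /= ltNge lee_fin ltW.
have [->|r_neq0] := eqVneq r 0%R; first by rewrite lte_fin invr_gt0 g0 ltry.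
have r0 : (0 < r)%R by rewrite lt_neqAle eq_sym r_neq0 -lee_fin.
by rewrite !lte_fin -[X in (X < _)%R]invrK ltf_pV2 ?posrE ?invr_gt0.
Qed.

Lemma lte_pos_between z c : z < c -> 0 < c ->
  exists h : R, [/\ (0 < h)%R, z < h%:E & h%:E < c].
Proof.
move=> zc c0.
have [m [m0 zm mc]] : exists m : R, [/\ (0 <= m)%R, z <= m%:E & m%:E < c].
  case: z zc => [s| |] zc.
  - have [s0|s0] := leP s 0%R; [exists 0%R | exists s].
    + by split; rewrite // lee_fin.
    + by split; rewrite // ltW.
  - by rewrite ltNge leey in zc.
  - by exists 0%R; rewrite leNye.
case: c c0 mc {zc} => [r| |] // c0 mc;
  [exists ((m + r) / 2)%R | exists (m + 1)%R]; rewrite ?lte_fin in c0 mc;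
  by split; rewrite ?ltry ?(le_lt_trans zm) ?lte_fin //; lra.
Qed.

Lemma ereal_sup_pos_lt (P : R -> Prop) c : 0 <= c ->
  (forall g, (0 < g)%R -> P g <-> g%:E < c) ->
  (if `[< exists g, (0 < g)%R /\ P g >]
   then ereal_sup [set g%:E | g in [set g | (0 < g)%R /\ P g]] else 0) = c.
Proof.
move=> c0 Pc; case: asboolP => [[g [g0 /(Pc _ g0) gc]] | noP].
  apply/eqP; rewrite eq_le; apply/andP; split.
    by apply/ereal_supP => _ [h [h0 /(Pc _ h0) /ltW hc] <-].
  apply/le_gtP => z /lte_pos_between[|h [h0 zh hc]].
    by apply: lt_trans gc; rewrite lte_fin.
  apply: lt_le_trans zh _; apply: ereal_sup_ubound.
  by exists h => //; split; rewrite ?Pc.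
apply/eqP; rewrite eq_le c0 /= leNgt; apply/negP => c_gt0.
have [h [h0 _ hc]] := lte_pos_between _ _ c_gt0 c_gt0.
by apply: noP; exists h; split; rewrite ?Pc.
Qed.

End ereal_reciprocal.

Theorem lemma2p10 (R : realType) (sigma : R -> R)
  (sigma_ge0 : forall t : R, 0 <= t -> 0 <= sigma t)
  (sigma_nd : forall s t : R, 0 <= s -> s <= t -> sigma s <= sigma t)
  (sigma_oo : sigma t @[t --> +oo] --> +oo) :
  upper_matuszewska sigma = einv (gamma_index sigma) /\
  (gamma_index sigma = +oo%E <-> upper_matuszewska sigma = 0%E) /\
  (gamma_index sigma = 0%E <-> upper_matuszewska sigma = +oo%E).
Proof.
have sigma_gt0 : \forall x \near +oo, 0 < sigma x by exact: cvgry_gt.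
have alpha_ge0 := upper_matuszewska_ge0 sigma_nd sigma_gt0.
have gammaE : gamma_index sigma = einv (upper_matuszewska sigma).
  apply: ereal_sup_pos_lt; first exact: einv_ge0.
  by move=> g g0; rewrite -lte_einv //; exact: P_propP.
rewrite gammaE einvK //.
by split => //; split; [exact: einv_eqy | exact: einv_eq0].
Qed.
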